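(* Let $I$ be a countable index set with nested finite subsets $I_1\subset I_2\subset\cdots$, $\bigcup_nI_n=I$, let $W$ be a compact Hausdorff space, and let $m:X^{\mathbb{R}}\to C^*(W)$ be a minimal sequence measure function. Then for every real-valued continuous function $f\in C^*(W)$ and every $\varepsilon>0$ there exists $\mathbf{x}\in X^{\mathbb{R}}$ with $\|m(\mathbf{x})-f\|_\infty<\varepsilon$.
   Context: Frame compatible sequences: nonnegative real $\mathbf{x}$ with $0\le x_1\le|I_1|$, $0\le x_i-x_{i-1}\le|I_i\setminus I_{i-1}|$ ($i\ge2$); $X$ their set, $X^+=\{c\mathbf{x}:\mathbf{x}\in X,c\ge0\}$, $X^{\mathbb{R}}=\{\mathbf{x}^1-\mathbf{x}^2:\mathbf{x}^j\in X^+\}$. $\mathbf{x}\approx\mathbf{y}$ iff $\lim_n(x_n-y_n)/|I_n|=0$; for nonnegative sequences $\mathbf{y}\leqq\mathbf{x}$ iff $\liminf_n(x_n-y_n)/|I_n|\ge0$. For a compact Hausdorff $V$, $C^*(V)$ denotes real continuous functions on $V$. A sequence measure function is a linear map $m:X^{\mathbb{R}}\to C^*(V)$ with $m(\mathbf{x})=m(\mathbf{y})\iff\mathbf{x}\approx\mathbf{y}$ for $\mathbf{x},\mathbf{y}\in X^{\mathbb{R}}$, $m(\mathbf{x})\le m(\mathbf{y})$ pointwise $\iff\mathbf{x}\leqq\mathbf{y}$ for $\mathbf{x},\mathbf{y}\in X^+$, and $m((|I_1|,|I_2|,\dots))=1$. Such $m:X^{\mathbb{R}}\to C^*(W)$ is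 separable if for all $v\ne w$ in $W$ there is $\mathbf{x}\in X^{\mathbb{R}}$ with $m(\mathbf{x})(v)\ne m(\mathbf{x})(w)$; reducible if there is a compact $V\subsetneq W$ such that $\mathbf{x}\mapsto m(\mathbf{x})|_V$ is a sequence measure function $X^{\mathbb{R}}\to C^*(V)$; irreducible if not reducible; minimal if separable and irreducible. *)

From HB Require Import structures.
From mathcomp Require Import all_boot all_order all_algebra.
From mathcomp Require Import finmap.
From mathcomp Require Import all_classical all_reals all_analysis.
Set Implicit Arguments. Unset Strict Implicit. Unset Printing Implicit Defensive.
Import Order.TTheory GRing.Theory Num.Theory.
Import numFieldNormedType.Exports.
Local Open Scope classical_set_scope.
Local Open Scope ring_scope.

(* A frame: nested finite subsets F 0 ⊆ F 1 ⊆ ... of a countable type I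
   whose union is I.  The paper's I_n is F (n-1): sequences are indexed from 0. *)
Definition frame (I : countType) (F : nat -> {fset I}) : Prop :=
  (forall n, (F n `<=` F n.+1)%fset) /\ (forall i : I, exists n, i \in F n).

Section Seq.
Variables (R : realType) (I : countType) (F : nat -> {fset I}).

Definition card_frame (n : nat) : R := (#|` F n|)%:R.

Definition frame_compatible (x : nat -> R) : Prop :=
  (0 <= x 0 /\ x 0 <= card_frame 0) /\
  (forall n, 0 <= x n.+1 - x n /\ x n.+1 - x n <= (#|` (F n.+1 `\` F n)%fset|)%:R).

Definition Xplus (x : nat -> R) : Prop :=
  exists c y, 0 <= c /\ frame_compatible y /\ x = (fun n => c * y n).

Definition XR (x : nat -> R) : Prop :=
  exists x1 x2, Xplus x1 /\ Xplus x2 /\ x = (fun n => x1 n - x2 n).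

Definition seq_approx (x y : nat -> R) : Prop :=
  (x n - y n) / card_frame n @[n --> \oo] --> 0.

Definition seq_leqq (y x : nat -> R) : Prop :=
  (0 <= limn_einf (fun n => ((x n - y n) / card_frame n)%:E))%E.

Definition full_seq : nat -> R := card_frame.

(* m : X^R -> C*(V), where m(x)|_V is the restriction to the subset V of W
   (with the subspace topology). *)
Definition smf_on (W : topologicalType) (V : set W) (m : (nat -> R) -> W -> R)
  : Prop :=
  (forall (a b : R) x y, XR x -> XR y -> forall w, V w ->
      m (fun n => a * x n + b * y n) w = a * m x w + b * m y w) /\
  (forall x, XR x -> {within V, continuous (m x)}) /\
  (forall x y, XR x -> XR y ->
      ((forall w, V w -> m x w = m y w) <-> seq_approx x y)) /\
  (forall x y, Xplus x -> Xplus y ->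
      ((forall w, V w -> m x w <= m y w) <-> seq_leqq x y)) /\
  (forall w, V w -> m full_seq w = 1).

Definition seq_measure_function (W : topologicalType) (m : (nat -> R) -> W -> R)
  : Prop := smf_on [set: W] m.

Definition smf_separable (W : topologicalType) (m : (nat -> R) -> W -> R) : Prop :=
  forall v w : W, v <> w -> exists x, XR x /\ m x v <> m x w.

Definition smf_reducible (W : topologicalType) (m : (nat -> R) -> W -> R) : Prop :=
  exists V : set W, compact V /\ V `<` [set: W] /\ smf_on V m.

Definition smf_minimal (W : topologicalType) (m : (nat -> R) -> W -> R) : Prop :=
  smf_separable m /\ ~ smf_reducible m.

End Seq.

Definition sup_norm (R : realType) (W : topologicalType) (f : W -> R) : R :=
  sup (range (fun w => `|f w|)).

From HB Require Import structures.
From mathcomp Require Import all_boot all_order all_algebra.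
From mathcomp Require Import finmap.
From mathcomp Require Import all_classical all_reals all_analysis.
From mathcomp Require Import ring lra.
Import Order.TTheory GRing.Theory Num.Theory.
Import numFieldNormedType.Exports.
Local Open Scope classical_set_scope.
Local Open Scope ring_scope.

(* Call w a lattice point if m(|y|)(w) = |m(y)(w)| for every y.  If m(u) is
   negative somewhere, then u_n <= -e |I_n| for infinitely many n; a free
   ultrafilter U on the naturals containing these n yields, by compactness, a
   point w at which m vanishes on every nonnegative sequence that is o(|I_n|)
   along U.  Since U decides the sign of every y, such a w is a lattice point,
   and m(u)(w) <= -e.  Hence m restricted to the closed set of lattice points is
   still a sequence measure function, and irreducibility makes every point a
   lattice point.  The range of m is then a vector lattice of continuous
   functions that contains the constants and, by separability, interpolates any
   function at any two points, so it is uniformly dense by the lattice version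
   of the Stone-Weierstrass theorem (Kakutani-Krein). *)

Lemma limn_einf_ge0P (R : realType) (a : nat -> R) :
  (0 <= limn_einf (fun n => (a n)%:E))%E <->
  (forall e, 0 < e -> exists N, forall n, (N <= n)%N -> - e < a n).
Proof.
have -> : limn_einf (fun n => (a n)%:E) =
    ereal_sup (range (einfs (fun n => (a n)%:E))).
  by rewrite limn_einf_lim; apply/cvg_lim => //; exact: cvg_einfs_sup.
split.
- move=> a_ge0 e e0.
  have : ((- e)%:E < ereal_sup (range (einfs (fun n => (a n)%:E))))%E.
    by apply: lt_le_trans a_ge0; rewrite lte_fin oppr_lt0.
  move=> /ereal_sup_gt [_ [N _ <-]] ltN; exists N => n Nn.
  by rewrite -lte_fin (lt_le_trans ltN) //; apply: ereal_inf_lbound; exists n.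
- move=> a_ev; apply/lee_subgt0Pr => e e0; rewrite sub0e.
  have [N ltN] := a_ev e e0.
  apply: (@le_trans _ _ (einfs (fun n => (a n)%:E) N)).
    by apply: le_ereal_inf_tmp => _ [n /= Nn <-]; rewrite lee_fin ltW // ltN.
  by apply: ereal_sup_ubound; exists N.
Qed.

Lemma not_eventually_gtN (R : realType) (a : nat -> R) :
  ~ (forall e, 0 < e -> exists N, forall n, (N <= n)%N -> - e < a n) ->
  exists2 e, 0 < e & forall N, exists2 n, (N <= n)%N & a n <= - e.
Proof.
move=> /existsNP [e /not_implyP [e0 /forallNP noN]]; exists e => // N.
have /existsNP [n /not_implyP [Nn /negP]] := noN N.
by rewrite -leNgt; exists n.
Qed.

Lemma exists_ultra_tails {S : set nat} :
  (forall N, exists2 n, (N <= n)%N & S n) ->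
  exists U : set_system nat,
    [/\ UltraFilter U, U S & forall N, U [set n | (N <= n)%N]].
Proof.
move=> S_inf.
pose T := filter_from setT (fun N => S `&` [set n | (N <= n)%N]).
have T_proper : ProperFilter T.
  apply: filter_from_proper => [|N _]; last first.
    by have [n Nn Sn] := S_inf N; exists n.
  apply: filter_fromT_filter => [|i j]; first by exists 0%N.
  by exists (maxn i j) => n [Sn]; rewrite /= geq_max => /andP[].
have [U [UU TU]] := ultraFilterLemma T_proper.
exists U; split => //; first by apply: TU; exists 0%N => // n [].
by move=> N; apply: TU; exists N => // n [].
Qed.

Lemma compact_directed_bigcap_neq0 (W : topologicalType) (I : Type)
    (D : set I) (B : I -> set W) :
  compact [set: W] -> (exists i, D i) ->
  (forall i j, D i -> D j -> exists2 k, D k & B k `<=` B i `&` B j) ->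
  (forall i, D i -> closed (B i)) -> (forall i, D i -> B i !=set0) ->
  \bigcap_(i in D) B i !=set0.
Proof.
move=> cW D0 D_dir B_closed B_n0.
have B_proper : ProperFilter (filter_from D B).
  by apply: filter_from_proper => //; exact: filter_from_filter.
have [w [_]] := cW _ B_proper filterT.
rewrite clusterE => w_cl; exists w => i Di.
have /closure_id -> := B_closed i Di.
by apply: w_cl; exists i.
Qed.

Lemma closed_fun_le (R : realType) (W : topologicalType) (g : W -> R) (a : R) :
  continuous g -> closed [set w | g w <= a].
Proof.
move=> g_cont; apply: (@preimage_closed _ _ g [set x | x <= a]).
  by move=> w _; exact: g_cont.
exact: closed_le.
Qed.

Lemma sup_norm_le (R : realType) (W : topologicalType) (g : W -> R) (b : R) :
  0 <= b -> (forall w, `|g w| <= b) -> sup_norm g <= b.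
Proof.
move=> b0 gb; have [[w _]|W0] := pselect (exists w : W, True).
  by apply: ge_sup => [|_ [v _ <-]]; [exists `|g w|; exists w|exact: gb].
rewrite /sup_norm (_ : range (fun w => `|g w|) = set0) ?sup0 //.
by apply/seteqP; split => // r [w _ _]; apply: W0; exists w.
Qed.

Lemma maxr_halfE (R : realFieldType) (a b : R) :
  Num.max a b = 2^-1 * (a + b) + 2^-1 * `|a - b|.
Proof. by rewrite maxr_absE mulrC mulrDr. Qed.

Lemma minr_halfE (R : realFieldType) (a b : R) :
  Num.min a b = 2^-1 * (a + b) + (- 2^-1) * `|a - b|.
Proof. by rewrite minr_absE mulrC mulrDr mulrN mulNr. Qed.

Section LatticeApproximation.
Context {R : realType} {W : topologicalType} {L : set (W -> R)} {f : W -> R}.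
Hypotheses (cW : compact [set: W]) (f_cont : continuous f) (L0 : L !=set0).
Hypotheses (L_cont : forall g, L g -> continuous g)
  (L_max : forall g h, L g -> L h -> L (fun w => Num.max (g w) (h w)))
  (L_min : forall g h, L g -> L h -> L (fun w => Num.min (g w) (h w)))
  (L_interp : forall s t, exists2 g, L g & g s = f s /\ g t = f t).

Lemma lattice_approx_at s eps : 0 < eps ->
  exists2 g, L g & g s = f s /\ forall w, f w - eps < g w.
Proof.
move=> e0; apply: contrapT => no_g.
pose D := [set g | L g /\ g s = f s].
suff [w Bw] : exists w, forall g, D g -> g w - f w <= - eps.
  have [h Lh [hs hw]] := L_interp s w.
  by have := Bw h (conj Lh hs); rewrite hw subrr oppr_ge0 leNgt e0.
apply: (@compact_directed_bigcap_neq0 _ _ D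
  (fun g => [set w | g w - f w <= - eps]) cW).
- by have [g Lg [gs _]] := L_interp s s; exists g.
- move=> g h [Lg gs] [Lh hs]; exists (fun w => Num.max (g w) (h w)).
    by split; [exact: L_max | rewrite gs hs maxxx].
  by move=> w /=; rewrite !lerBlDr ge_max => /andP[].
- move=> g [Lg _]; apply: closed_fun_le => w.
  by apply: cvgB; [exact: L_cont | exact: f_cont].
- move=> g [Lg gs]; apply: contrapT => /forallNP Bg0; apply: no_g.
  exists g => //; split => // w; rewrite ltNge; apply/negP => gw.
  by apply: (Bg0 w) => /=; lra.
Qed.

Lemma lattice_approx eps : 0 < eps ->
  exists2 g, L g & forall w, `|g w - f w| < eps.
Proof.
move=> e0; apply: contrapT => no_g.
pose D := [set g | L g /\ forall w, f w - eps < g w].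
suff [w Bw] : exists w, forall g, D g -> f w - g w <= - eps.
  have [h Lh [hw h_gt]] := lattice_approx_at w eps e0.
  by have := Bw h (conj Lh h_gt); rewrite hw subrr oppr_ge0 leNgt e0.
apply: (@compact_directed_bigcap_neq0 _ _ D
  (fun g => [set w | f w - g w <= - eps]) cW).
- have [[s _]|W0] := pselect (exists s : W, True).
    by have [g Lg [_ g_gt]] := lattice_approx_at s eps e0; exists g.
  by have [g Lg] := L0; exists g; split => // w; case: W0; exists w.
- move=> g h [Lg g_gt] [Lh h_gt]; exists (fun w => Num.min (g w) (h w)).
    by split => [|w]; [exact: L_min | rewrite lt_min g_gt h_gt].
  by move=> w /=; rewrite !lerBlDl -!lerBlDr le_min => /andP[].
- move=> g [Lg _]; apply: closed_fun_le => w.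
  by apply: cvgB; [exact: f_cont | exact: L_cont].
- move=> g [Lg g_gt]; apply: contrapT => /forallNP Bg0; apply: no_g.
  exists g => // w; have := g_gt w; rewrite ltr_norml ltNge => gw.
  apply/andP; split; first lra.
  by apply/negP => le_g; apply: (Bg0 w) => /=; lra.
Qed.

End LatticeApproximation.

Section FrameSequences.
Context {R : realType} {I : countType} {F : nat -> {fset I}}.
Hypothesis hF : frame F.
Local Notation c := (card_frame R F).
Implicit Types (x y : nat -> R) (a b C : R).

Lemma card_frame_ge0 n : 0 <= c n.
Proof. exact: ler0n. Qed.

Lemma card_frameS_sub n : (#|` (F n.+1 `\` F n)%fset|)%:R = c n.+1 - c n.
Proof.
have sub_n := hF.1 n.
by rewrite cardfsDS // natrB // fsubset_leq_card.
Qed.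

Lemma card_frame_leS n : c n <= c n.+1.
Proof. by rewrite -subr_ge0 -card_frameS_sub. Qed.

Lemma card_frame_nondecreasing : {homo c : n k / (n <= k)%N >-> n <= k}.
Proof.
by apply: homo_leq => [//|k j l|]; [exact: le_trans | exact: card_frame_leS].
Qed.

Definition increments_bounded x C :=
  `|x 0%N| <= C * c 0%N /\ forall n, `|x n.+1 - x n| <= C * (c n.+1 - c n).

Lemma frame_compatible_bounded {y} : frame_compatible F y -> increments_bounded y 1.
Proof.
move=> [[y0 y0_le] yS]; rewrite /increments_bounded mul1r ger0_norm //.
by split => // n; have [dy0 dy_le] := yS n; rewrite mul1r ger0_norm -?card_frameS_sub.
Qed.

Lemma frame_compatible_card : frame_compatible F c.
Proof.
split=> [|n]; first by split; [exact: card_frame_ge0|].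
by rewrite card_frameS_sub subr_ge0 card_frame_leS.
Qed.

Lemma increments_bounded_lin a b {x y C1 C2} :
  increments_bounded x C1 -> increments_bounded y C2 ->
  increments_bounded (fun n => a * x n + b * y n) (`|a| * C1 + `|b| * C2).
Proof.
have norm_lin u v U V :
    `|u| <= U -> `|v| <= V -> `|a * u + b * v| <= `|a| * U + `|b| * V.
  move=> uU vV; rewrite (le_trans (ler_normD _ _)) // !normrM.
  by rewrite lerD // ler_wpM2l.
move=> [x0 xS] [y0 yS]; split; first by rewrite mulrDl -!mulrA norm_lin.
move=> n; rewrite mulrDl -!mulrA.
have -> : a * x n.+1 + b * y n.+1 - (a * x n + b * y n)
          = a * (x n.+1 - x n) + b * (y n.+1 - y n) by ring.
exact: norm_lin.
Qed.

Lemma XR_increments_bounded {x} : XR F x -> exists C, increments_bounded x C.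
Proof.
move=> [_ [_ [[a [y1 [_ [fy1 ->]]]] [[b [y2 [_ [fy2 ->]]]] ->]]]].
exists (`|a| * 1 + `|- b| * 1).
have := increments_bounded_lin a (- b)
  (frame_compatible_bounded fy1) (frame_compatible_bounded fy2).
by congr increments_bounded; apply: funext => n; rewrite mulNr.
Qed.

Lemma increments_bounded_XR {x C} : increments_bounded x C -> XR F x.
Proof.
move=> [x0 xS].
pose C' := `|C| + 1; have C'_gt0 : 0 < C' by rewrite ltr_wpDl.
have C_le u t : 0 <= t -> `|u| <= C * t -> `|u| <= C' * t.
  move=> t0 /le_trans; apply; rewrite ler_wpM2r //.
  by rewrite (le_trans (ler_norm C)) // lerDl.
have shift_bounds u t : `|u| <= C' * t ->
    0 <= (u + C' * t) / (2 * C') /\ (u + C' * t) / (2 * C') <= t.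
  rewrite ler_norml => /andP[lo hi].
  have C2_gt0 : 0 < 2 * C' by rewrite mulr_gt0.
  rewrite ler_pdivrMr // divr_ge0 ?(ltW C2_gt0) //; last lra.
  split => //; lra.
pose p n := (x n + C' * c n) / (2 * C').
exists (fun n => (2 * C') * p n), (fun n => C' * c n); split; last split.
- exists (2 * C'), p; split; first by rewrite mulr_ge0 // ltW.
  split => //; split => [|n]; first exact/shift_bounds/C_le/x0/card_frame_ge0.
  rewrite card_frameS_sub /p -mulrBl.
  have -> : x n.+1 + C' * c n.+1 - (x n + C' * c n)
      = (x n.+1 - x n) + C' * (c n.+1 - c n) by ring.
  by apply/shift_bounds/C_le/xS; rewrite subr_ge0 card_frame_leS.
- by exists C', c; split; [exact: ltW | split => //; exact: frame_compatible_card].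
- apply: funext => n; rewrite /p mulrC divfK ?mulf_neq0 ?lt0r_neq0 //; lra.
Qed.

Lemma XR_card : XR F c.
Proof.
exact: increments_bounded_XR (frame_compatible_bounded frame_compatible_card).
Qed.

Lemma XR_lin a b {x y} : XR F x -> XR F y -> XR F (fun n => a * x n + b * y n).
Proof.
move=> /XR_increments_bounded [C1 x_bd] /XR_increments_bounded [C2 y_bd].
exact: increments_bounded_XR (increments_bounded_lin a b x_bd y_bd).
Qed.

Lemma XR_scale a {x} : XR F x -> XR F (fun n => a * x n).
Proof.
move=> Xx; have := XR_lin a 0 Xx Xx.
by congr XR; apply: funext => n; rewrite mul0r addr0.
Qed.

Lemma XR_add {x y} : XR F x -> XR F y -> XR F (fun n => x n + y n).
Proof.
move=> Xx Xy; have := XR_lin 1 1 Xx Xy.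
by congr XR; apply: funext => n; rewrite !mul1r.
Qed.

Lemma XR_sub {x y} : XR F x -> XR F y -> XR F (fun n => x n - y n).
Proof.
move=> Xx Xy; have := XR_lin 1 (-1) Xx Xy.
by congr XR; apply: funext => n; rewrite mul1r mulN1r.
Qed.

Lemma XR_abs {x} : XR F x -> XR F (fun n => `|x n|).
Proof.
move=> /XR_increments_bounded [C [x0 xS]]; apply: (@increments_bounded_XR _ C).
by split => [|n]; rewrite ?normr_id // (le_trans (ler_dist_dist _ _)).
Qed.

Lemma XR_max {x y} : XR F x -> XR F y -> XR F (fun n => Num.max (x n) (y n)).
Proof.
move=> Xx Xy; under eq_fun do rewrite maxr_halfE.
exact: XR_lin (XR_add Xx Xy) (XR_abs (XR_sub Xx Xy)).
Qed.

Lemma XR_min {x y} : XR F x -> XR F y -> XR F (fun n => Num.min (x n) (y n)).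
Proof.
move=> Xx Xy; under eq_fun do rewrite minr_halfE.
exact: XR_lin (XR_add Xx Xy) (XR_abs (XR_sub Xx Xy)).
Qed.

Lemma Xplus_XR {x} : Xplus F x -> XR F x.
Proof.
move=> Px; exists x, (fun _ => 0); split => //; split.
  exists 0, c; split => //; split; first exact: frame_compatible_card.
  by apply: funext => n; rewrite mul0r.
by apply: funext => n; rewrite subr0.
Qed.

End FrameSequences.

Section SequenceMeasureFunction.
Context {R : realType} {I : countType} {F : nat -> {fset I}}.
Context {W : topologicalType} {m : (nat -> R) -> W -> R}.
Hypotheses (hF : frame F) (hm : seq_measure_function F m).
Local Notation c := (card_frame R F).
Implicit Types (x y u z : nat -> R) (a b : R).

Lemma m_continuous {x} : XR F x -> continuous (m x).
Proof.
move=> Xx w; have /subspace_continuousP/(_ w Logic.I) := hm.2.1 x Xx.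
by rewrite withinET.
Qed.

Lemma m_lin a b {x y} w : XR F x -> XR F y ->
  m (fun n => a * x n + b * y n) w = a * m x w + b * m y w.
Proof. by move=> Xx Xy; exact: hm.1. Qed.

Lemma mZ a {x} w : XR F x -> m (fun n => a * x n) w = a * m x w.
Proof.
move=> Xx; have := m_lin a 0 w Xx Xx; rewrite mul0r addr0 => <-.
by congr m; apply: funext => n; rewrite mul0r addr0.
Qed.

Lemma mD {x y} w : XR F x -> XR F y -> m (fun n => x n + y n) w = m x w + m y w.
Proof.
move=> Xx Xy; have := m_lin 1 1 w Xx Xy; rewrite !mul1r => <-.
by congr m; apply: funext => n; rewrite !mul1r.
Qed.

Lemma mB {x y} w : XR F x -> XR F y -> m (fun n => x n - y n) w = m x w - m y w.
Proof.
move=> Xx Xy; have := m_lin 1 (-1) w Xx Xy; rewrite mul1r mulN1r => <-.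
by congr m; apply: funext => n; rewrite mul1r mulN1r.
Qed.

Lemma m_card w : m c w = 1.
Proof. exact: hm.2.2.2.2. Qed.

Lemma m_const a w : m (fun n => a * c n) w = a.
Proof. by rewrite (mZ _ _ (XR_card hF)) m_card mulr1. Qed.

Definition asymp_nonneg u :=
  forall e, 0 < e -> exists N, forall n, (N <= n)%N -> - e < u n / c n.

Lemma m_ge0P {u} : XR F u -> (forall w, 0 <= m u w) <-> asymp_nonneg u.
Proof.
move=> [x1 [x2 [P1 [P2 ->]]]].
have [X1 X2] := (Xplus_XR hF P1, Xplus_XR hF P2).
rewrite /asymp_nonneg.
have := hm.2.2.2.1 x2 x1 P2 P1; rewrite /seq_leqq limn_einf_ge0P => <-.
under eq_forall do rewrite mB // subr_ge0.
by split => le w => [_|]; exact: le.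
Qed.

Lemma m_ge0 {u} : XR F u -> (forall n, 0 <= u n) -> forall w, 0 <= m u w.
Proof.
move=> Xu u_ge0; apply/(m_ge0P Xu) => e e0; exists 0%N => n _.
by rewrite (@lt_le_trans _ _ 0) ?oppr_lt0 ?divr_ge0.
Qed.

Lemma m_le {x y} : XR F x -> XR F y -> (forall n, x n <= y n) ->
  forall w, m x w <= m y w.
Proof.
move=> Xx Xy le_xy w; rewrite -subr_ge0 -mB //.
by apply: m_ge0 => [|n]; [exact: XR_sub | rewrite subr_ge0].
Qed.

Lemma card_frame_eventually_gt0 (w0 : W) :
  exists N, forall n, (N <= n)%N -> 0 < c n.
Proof.
have [N cN] : exists N, c N != 0.
  apply: contrapT => /forallNP c0; have := m_const 0 w0.
  have -> : (fun n => 0 * c n) = c.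
    by apply: funext => n; rewrite mul0r; apply/esym/eqP/negbNE/negP; exact: c0.
  by rewrite m_card; apply/eqP; rewrite oner_eq0.
exists N => n Nn; rewrite (lt_le_trans _ (card_frame_nondecreasing hF _ _ Nn)) //.
by rewrite lt0r cN card_frame_ge0.
Qed.

Hypothesis cW : compact [set: W].

Definition lattice_point (w : W) :=
  forall y, XR F y -> m (fun n => `|y n|) w = `|m y w|.

Section NegligibleSequences.
Context {U : set_system nat}.
Hypotheses (UU : UltraFilter U) (U_tail : forall N, U [set n | (N <= n)%N])
  (U_pos : U [set n | 0 < c n]).

Definition negligible z := [/\ XR F z, forall n, 0 <= z n &
  forall e, 0 < e -> U [set n | z n < e * c n]].

Lemma negligibleD {z1 z2} :
  negligible z1 -> negligible z2 -> negligible (fun n => z1 n + z2 n).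
Proof.
move=> [X1 z1_ge0 U1] [X2 z2_ge0 U2]; split => [|n|e e0]; first exact: XR_add.
  exact: addr_ge0.
have e2 : 0 < e / 2 by rewrite divr_gt0.
by apply: filterS (filterI (U1 _ e2) (U2 _ e2)) => n /= [? ?]; lra.
Qed.

Lemma negligible_m_lt {z d} : negligible z -> 0 < d -> exists w, m z w < d.
Proof.
move=> [Xz _ z_small] d0; apply: contrapT => /forallNP m_ge.
have d2 : 0 < d / 2 by rewrite divr_gt0.
have Xd := XR_scale hF d (XR_card hF).
have m_zd_ge0 w : 0 <= m (fun n => z n - d * c n) w.
  by rewrite mB // m_const subr_ge0 leNgt; apply/negP.
have [N zd_gt] := (m_ge0P (XR_sub hF Xz Xd)).1 m_zd_ge0 _ d2.
have [n /= [[Nn zn] cn]] :=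
  filter_ex (filterI (filterI (U_tail N) (z_small _ d2)) U_pos).
by have := zd_gt n Nn; rewrite ltr_pdivlMr //; lra.
Qed.

Lemma exists_negligible_root : exists w, forall z, negligible z -> m z w = 0.
Proof.
suff [w w_le] : exists w, forall p, negligible p.1 /\ 0 < p.2 -> m p.1 w <= p.2.
  exists w => z z_negl; apply/eqP; rewrite eq_le; apply/andP; split.
    by apply/ler_addgt0Pr => d d0; rewrite add0r; exact: (w_le (z, d)).
  by case: z_negl => Xz z_ge0 _; exact: m_ge0.
apply: (@compact_directed_bigcap_neq0 _ _ [set p | negligible p.1 /\ 0 < p.2]
  (fun p => [set w | m p.1 w <= p.2]) cW).
- exists ((fun n => 0 * c n), 1); split => //; split => [|n|e e0] /=.
  + exact: (XR_scale hF 0 (XR_card hF)).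
  + by rewrite mul0r.
  + by apply: filterS U_pos => n /= cn; rewrite mul0r mulr_gt0.
- move=> [z1 d1] [z2 d2] [z1_negl d1_gt0] [z2_negl d2_gt0].
  exists ((fun n => z1 n + z2 n), Num.min d1 d2).
    by split; [exact: negligibleD | rewrite /= lt_min d1_gt0 d2_gt0].
  case: z1_negl z2_negl => [X1 z1_ge0 _] [X2 z2_ge0 _] w /=.
  rewrite mD // le_min => /andP[le1 le2].
  by have := m_ge0 X1 z1_ge0 w; have := m_ge0 X2 z2_ge0 w; split; lra.
- by move=> [z d] [[Xz _ _] _]; apply: closed_fun_le; exact: m_continuous.
- move=> [z d] [z_negl d0]; have [w ?] := negligible_m_lt z_negl d0.
  by exists w; apply: ltW.
Qed.

Section NegligibleRoot.
Context {w : W}.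
Hypothesis w_root : forall z, negligible z -> m z w = 0.

Lemma negligible_root_lattice : lattice_point w.
Proof.
move=> y Xy; have X_abs := XR_abs hF Xy.
have m_abs_ge0 := m_ge0 X_abs (fun n => normr_ge0 (y n)) w.
have [Uy|Uy] := in_ultra_setVsetC [set n | 0 <= y n] UU.
- have : m (fun n => `|y n| - y n) w = 0.
    apply: w_root; split => [|n|e e0]; first exact: XR_sub.
      by rewrite subr_ge0 ler_norm.
    apply: filterS (filterI Uy U_pos) => n /= [y_ge0 cn].
    by rewrite ger0_norm // subrr mulr_gt0.
  rewrite mB // => /eqP; rewrite subr_eq0 => /eqP m_eq.
  by rewrite m_eq ger0_norm // -m_eq.
- have : m (fun n => `|y n| + y n) w = 0.
    apply: w_root; split => [|n|e e0]; first exact: XR_add.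
      by rewrite -lerBlDr sub0r -normrN ler_norm.
    apply: filterS (filterI Uy U_pos) => n /= [/negP y_lt0 cn].
    by rewrite ltr0_norm ?addNr ?mulr_gt0 // ltNge.
  rewrite mD // => /eqP; rewrite addr_eq0 => /eqP m_eq.
  by rewrite m_eq ler0_norm ?opprK // -oppr_ge0 -m_eq.
Qed.

Lemma negligible_root_le {u} e : XR F u -> 0 < e ->
  U [set n | u n / c n <= - e] -> m u w <= - e.
Proof.
move=> Xu e0 Uu.
have Xe := XR_scale hF e (XR_card hF); have Xv := XR_add hF Xu Xe.
pose v n := u n + e * c n.
have Xz := XR_lin hF 2^-1 2^-1 Xv (XR_abs hF Xv).
have m_z : m (fun n => 2^-1 * v n + 2^-1 * `|v n|) w = 0.
  apply: w_root; split => [|n|e' e'0] //.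
    by have := ler_norm (- v n); rewrite normrN => ?; lra.
  apply: filterS (filterI Uu U_pos) => n /= [un cn].
  move: un; rewrite ler_pdivrMr // mulNr -/(v n) -subr_le0 opprK => v_le0.
  by rewrite /v ler0_norm // mulrN addrN mulr_gt0.
have v_le n : v n <= 2^-1 * v n + 2^-1 * `|v n|.
  by have := ler_norm (v n); lra.
have := m_le Xv Xz v_le w.
by rewrite m_z mD // m_const; lra.
Qed.

End NegligibleRoot.

End NegligibleSequences.

Lemma exists_lattice_point_lt0 {u} (w0 : W) : XR F u -> m u w0 < 0 ->
  exists w, lattice_point w /\ m u w < 0.
Proof.
move=> Xu mu_lt0.
have [N0 c_gt0] := card_frame_eventually_gt0 w0.
have [e e0 u_freq] : exists2 e, 0 < e &
    forall N, exists2 n, (N <= n)%N & u n / c n <= - e.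
  apply: not_eventually_gtN => /(m_ge0P Xu)/(_ w0).
  by rewrite leNgt mu_lt0.
pose S := [set n | (N0 <= n)%N /\ u n / c n <= - e].
have S_inf N : exists2 n, (N <= n)%N & S n.
  have [n] := u_freq (maxn N N0); rewrite geq_max => /andP[Nn N0n] un.
  by exists n.
have [U [UU US U_tail]] := exists_ultra_tails S_inf.
have U_pos : U [set n | 0 < c n] by apply: filterS US => n [/c_gt0].
have [w w_root] := exists_negligible_root UU U_tail U_pos.
exists w; split; first exact: negligible_root_lattice w_root.
have U_neg : U [set n | u n / c n <= - e] by apply: filterS US => n [].
have := negligible_root_le UU U_pos w_root e Xu e0 U_neg.
by move=> /le_lt_trans; apply; rewrite oppr_lt0.
Qed.

Lemma m_le_lattice_points {x y} : XR F x -> XR F y ->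
  (forall w, lattice_point w -> m x w <= m y w) -> forall w, m x w <= m y w.
Proof.
move=> Xx Xy le_xy w0; rewrite leNgt -subr_lt0 -mB //; apply/negP => lt0.
have [w [Lw]] := exists_lattice_point_lt0 w0 (XR_sub hF Xy Xx) lt0.
by rewrite mB // subr_lt0 ltNge le_xy.
Qed.

Lemma closed_lattice_points : closed lattice_point.
Proof.
have -> : lattice_point = \bigcap_(y in XR F)
    ((fun w => m (fun n => `|y n|) w - `|m y w|) @^-1` [set 0]).
  apply/seteqP; split => w; first by move=> Lw y Xy /=; rewrite Lw // subrr.
  by move=> w_in y Xy; apply/eqP; rewrite -subr_eq0; apply/eqP; exact: w_in.
apply: closed_bigI => y Xy; apply: preimage_closed; last exact: closed_eq.
move=> w _; apply: cvgB; first exact: m_continuous (XR_abs hF Xy) w.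
exact: continuous_comp (m_continuous Xy w) (@norm_continuous _ R^o _).
Qed.

Lemma smf_on_lattice_points : smf_on F lattice_point m.
Proof.
split; first by move=> a b x y Xx Xy w _; exact: m_lin.
split; first by move=> x Xx; apply: continuous_subspaceT; exact: m_continuous.
split.
  move=> x y Xx Xy; rewrite -(hm.2.2.1 x y Xx Xy).
  split => [eq_xy w _|eq_xy w _]; last exact: eq_xy.
  by apply/le_anti/andP; split; apply: m_le_lattice_points => // v Lv; rewrite eq_xy.
split; last by move=> w _; exact: m_card.
move=> x y Px Py; rewrite -(hm.2.2.2.1 x y Px Py).
have [Xx Xy] := (Xplus_XR hF Px, Xplus_XR hF Py).
split => [le w _|le w _]; last exact: le.
by apply: m_le_lattice_points => // v; exact: le.
Qed.

Hypothesis m_irreducible : ~ smf_reducible F m.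

Lemma lattice_pointT w : lattice_point w.
Proof.
apply: contrapT => not_Lw; apply: m_irreducible; exists lattice_point; split.
  exact: subclosed_compact closed_lattice_points cW _.
split; last exact: smf_on_lattice_points.
by split => // Lw; apply: not_Lw; exact: Lw.
Qed.

Lemma m_max {x y} w : XR F x -> XR F y ->
  m (fun n => Num.max (x n) (y n)) w = Num.max (m x w) (m y w).
Proof.
move=> Xx Xy; have Xxy := XR_sub hF Xx Xy.
have [Xs Xa] := (XR_add hF Xx Xy, XR_abs hF Xxy).
under eq_fun do rewrite maxr_halfE.
by rewrite m_lin // (lattice_pointT w _ Xxy) mB // mD // maxr_halfE.
Qed.

Lemma m_min {x y} w : XR F x -> XR F y ->
  m (fun n => Num.min (x n) (y n)) w = Num.min (m x w) (m y w).
Proof.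
move=> Xx Xy; have Xxy := XR_sub hF Xx Xy.
have [Xs Xa] := (XR_add hF Xx Xy, XR_abs hF Xxy).
under eq_fun do rewrite minr_halfE.
by rewrite m_lin // (lattice_pointT w _ Xxy) mB // mD // minr_halfE.
Qed.

Definition m_range : set (W -> R) := [set g | exists2 x, XR F x & m x = g].

Lemma m_range_const a : m_range (fun _ => a).
Proof.
exists (fun n => a * c n); first exact: (XR_scale hF a (XR_card hF)).
by apply: funext => w; exact: m_const.
Qed.

Lemma m_range_continuous g : m_range g -> continuous g.
Proof. by move=> [x Xx <-]; apply: m_continuous. Qed.

Lemma m_range_max g h : m_range g -> m_range h ->
  m_range (fun w => Num.max (g w) (h w)).
Proof.
move=> [x Xx <-] [y Xy <-]; exists (fun n => Num.max (x n) (y n)).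
  exact: XR_max.
by apply: funext => w; exact: m_max.
Qed.

Lemma m_range_min g h : m_range g -> m_range h ->
  m_range (fun w => Num.min (g w) (h w)).
Proof.
move=> [x Xx <-] [y Xy <-]; exists (fun n => Num.min (x n) (y n)).
  exact: XR_min.
by apply: funext => w; exact: m_min.
Qed.

Hypothesis m_separable : smf_separable F m.

Lemma m_range_interp (f : W -> R) s t :
  exists2 g, m_range g & g s = f s /\ g t = f t.
Proof.
have [<-|st] := pselect (s = t).
  by exists (fun _ => f s); first exact: m_range_const.
have [y [Xy my_st]] := m_separable s t st.
have my_st' : m y s - m y t != 0 by rewrite subr_eq0; apply/eqP.
pose a := (f s - f t) / (m y s - m y t); pose b := f s - a * m y s.
exists (fun w => a * m y w + b); last by split; rewrite /b /a; field.
exists (fun n => a * y n + b * c n); first exact: (XR_lin hF a b Xy (XR_card hF)).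
by apply: funext => w; rewrite m_lin ?m_card ?mulr1 //; exact: XR_card.
Qed.

End SequenceMeasureFunction.

Theorem theorem6p13 (R : realType) (I : countType) (F : nat -> {fset I})
  (W : topologicalType) (m : (nat -> R) -> W -> R) :
  frame F -> hausdorff_space W -> compact [set: W] ->
  seq_measure_function F m -> smf_minimal F m ->
  forall f : W -> R, continuous f ->
  forall eps : R, 0 < eps ->
  exists x, XR F x /\ sup_norm (fun w => m x w - f w) < eps.
Proof.
(* Compactness alone drives the argument. *)
move=> hF _ cW hm [m_sep m_irr] f f_cont eps e0.
have e2 : 0 < eps / 2 by rewrite divr_gt0.
have [_ [x Xx <-] approx] := lattice_approx cW f_cont
  (ex_intro _ _ (m_range_const hF hm 0)) (m_range_continuous hm)
  (m_range_max hF hm cW m_irr) (m_range_min hF hm cW m_irr)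
  (m_range_interp hF hm m_sep f) _ e2.
exists x; split => //; have half_lt : eps / 2 < eps by lra.
apply: le_lt_trans half_lt; apply: sup_norm_le => [|w]; last exact: ltW.
by rewrite divr_ge0 // ltW.
Qed.
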